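(* Let $x_1,\dots,x_N$ be observed data points and consider the mixture model with $K$ components $$p(x_n\mid \mathbf{p}_n;\mathbf{a})=\sum_{k=1}^K p_{n,k}\,\pi_k(x_n;a_k),$$ where $\mathbf{p}_n=(p_{n,1},\dots,p_{n,K})\in\Delta^K$ are sample-dependent mixing probabilities, $\pi_k(\cdot;a_k)$ are component densities with parameters $\mathbf{a}=(a_1,\dots,a_K)$, and $\boldsymbol\theta=((\mathbf{p}_n)_n,\mathbf{a})$. Complete each sample with a latent class $C_n\in\{1,\dots,K\}$ and a vector $\mathbf{B}_n\in\mathbb{R}^K$ serving as the parameter of a Dirichlet prior on $\mathbf{p}_n$, so that the completed log-posterior is $$\ell(\boldsymbol\theta;(x_n,C_n,\mathbf{B}_n)_n)=\sum_{n=1}^N\ln \mathrm{Dir}(\mathbf{p}_n\mid\mathbf{B}_n)+\sum_{n=1}^N\sum_{k=1}^K\delta_k^{C_n}\big[\ln p_{n,k}+\ln\pi_k(x_n;a_k)\big],$$ with $\mathrm{Dir}(\mathbf{p}\mid\mathbf{b})=\frac{\Gamma(\sum_k b_k)}{\prod_k\Gamma(b_k)}\prod_k p_k^{b_k-1}$. For all $(n,k)\in\{1,\dots,N\}\times\{1,\dots,K\}$, let $f_{n,k}:\mathbb{R}^N\to\mathbb{R}$ be any linear function such that $f_{n,k}([0,+\infty[^N)\subset\mathbb{R}_+$, and set $$\mathbf{B}_n=\big(f_{n,1}(\delta_1^{C_\cdot})-\delta_1^{C_n}+1,\dots,f_{n,K}(\delta_K^{C_\cdot})-\delta_K^{C_n}+1\big),$$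 where $\delta_k^{C_\cdot}=(\delta_k^{C_1},\dots,\delta_k^{C_N})\in\mathbb{R}^N$. Then, in the EM algorithm (E-step: take the conditional expectation of $\ell$ given the data $(x_n)_n$ and the previous estimate $\boldsymbol\theta^{(t)}$; M-step: maximize it over $\boldsymbol\theta$ subject to $\mathbf{p}_n\in\Delta^K$), the mixing probability updates are $$\forall (n,k),\quad p_{n,k}^{(t+1)}=\frac{f_{n,k}(\tau_{\cdot,k}^{(t)})}{\sum_{k'=1}^K f_{n,k'}(\tau_{\cdot,k'}^{(t)})},$$ where $\tau_{n,k}^{(t)}=P(C_n=k\mid x_n,\boldsymbol\theta^{(t)})$ is the posterior probability of component $k$ for sample $x_n$ at the previous E-step and $\tau_{\cdot,k}^{(t)}=(\tau_{1,k}^{(t)},\dots,\tau_{N,k}^{(t)})$.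
   Context: $\Delta^K$ denotes the $K$-dimensional probability simplex. $\delta_i^j$ is the Kronecker symbol. The posterior at step $t$ is $\tau_{n,k}^{(t)}=p_{n,k}^{(t)}\pi_k(x_n;a_k^{(t)})/\sum_{j}p_{n,j}^{(t)}\pi_j(x_n;a_j^{(t)})$. *)

From mathcomp Require Import all_boot all_order all_algebra.
From mathcomp Require Import all_classical all_reals all_analysis.
Set Implicit Arguments. Unset Strict Implicit. Unset Printing Implicit Defensive.
Import Order.TTheory GRing.Theory Num.Theory.
Local Open Scope ring_scope.
Local Open Scope classical_set_scope.

Section EMDefs.
Variable R : realType.

(* Euler Gamma function Gamma(x) = int_0^oo t^(x-1) e^(-t) dt
   (Lebesgue integral; only meaningful for x > 0). *)
Definition Gamma (x : R) : R :=
  Rintegral (@lebesgue_measure R) `]0, +oo[%classic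
    (fun t => t `^ (x - 1) * expR (- t)).

Definition in_simplex (K : nat) (q : 'I_K -> R) : Prop :=
  (forall k, 0 <= q k) /\ \sum_(k < K) q k = 1.

(* Open simplex (all coordinates positive): the domain where ln p_k and the
   Dirichlet log-density are defined. *)
Definition in_open_simplex (K : nat) (q : 'I_K -> R) : Prop :=
  (forall k, 0 < q k) /\ \sum_(k < K) q k = 1.

Definition lnDir (K : nat) (b q : 'I_K -> R) : R :=
  ln (Gamma (\sum_(k < K) b k)) - \sum_(k < K) ln (Gamma (b k))
  + \sum_(k < K) (b k - 1) * ln (q k).

Definition delta_row (N K : nat) (C : 'I_N -> 'I_K) (k : 'I_K) : 'rV[R]_N :=
  \row_(i < N) (C i == k)%:R.

Definition Bvec (N K : nat) (f : 'I_N -> 'I_K -> 'rV[R]_N -> R^o)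
  (C : 'I_N -> 'I_K) (n : 'I_N) : 'I_K -> R :=
  fun k => f n k (delta_row C k) - (C n == k)%:R + 1.

Definition complete_logpost (X A : Type) (N K : nat)
  (pi : 'I_K -> X -> A -> R) (f : 'I_N -> 'I_K -> 'rV[R]_N -> R^o)
  (x : 'I_N -> X) (p : 'I_N -> 'I_K -> R) (a : 'I_K -> A)
  (C : 'I_N -> 'I_K) : R :=
  \sum_(n < N) lnDir (Bvec f C n) (p n)
  + \sum_(n < N) \sum_(k < K)
      (C n == k)%:R * (ln (p n k) + ln (pi k (x n) (a k))).

Definition tau (X A : Type) (N K : nat) (pi : 'I_K -> X -> A -> R)
  (x : 'I_N -> X) (p : 'I_N -> 'I_K -> R) (a : 'I_K -> A)
  (n : 'I_N) (k : 'I_K) : R :=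
  p n k * pi k (x n) (a k) / \sum_(j < K) p n j * pi j (x n) (a j).

Definition tau_row (X A : Type) (N K : nat) (pi : 'I_K -> X -> A -> R)
  (x : 'I_N -> X) (p : 'I_N -> 'I_K -> R) (a : 'I_K -> A) (k : 'I_K)
  : 'rV[R]_N :=
  \row_(n < N) tau pi x p a n k.

(* E-step: conditional expectation of l(theta; .) given the data and the
   previous estimate theta^(t) = (pt, at); given these, the latent classes
   C_1..C_N are independent with P(C_n = k | x_n, theta^(t)) = tau_{n,k}. *)
Definition Qfun (X A : Type) (N K : nat) (pi : 'I_K -> X -> A -> R)
  (f : 'I_N -> 'I_K -> 'rV[R]_N -> R^o) (x : 'I_N -> X)
  (pt : 'I_N -> 'I_K -> R) (at_ : 'I_K -> A)
  (p : 'I_N -> 'I_K -> R) (a : 'I_K -> A) : R :=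
  \sum_(C : {ffun 'I_N -> 'I_K})
    (\prod_(n < N) tau pi x pt at_ n (C n)) * complete_logpost pi f x p a C.

End EMDefs.

From mathcomp Require Import all_boot all_order all_algebra.
From mathcomp Require Import all_classical all_reals all_analysis.
From mathcomp Require Import ring lra.
Set Implicit Arguments. Unset Strict Implicit. Unset Printing Implicit Defensive.
Import Order.TTheory GRing.Theory Num.Theory.
Local Open Scope ring_scope.

(* Given theta^(t), the classes C_n are independent with laws tau_n, so by
   linearity of the f_{n,k} the expected Dirichlet exponents collapse and, as a
   function of p, Q is a constant plus sum_n sum_k f_{n,k}(tau_{.,k}) ln p_{n,k}.
   By Gibbs' inequality each row of this sum is maximal on the simplex exactly
   at the normalized weights r_n.  As r_n may lie on the boundary, the
   optimality of p* on the open simplex is tested at the midpoint (p* + r)/2;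
   concavity of ln then shows that the rows of p* sum to at least those of r,
   which by Gibbs forces p*_n = r_n for every n. *)

Lemma linear_sumZ (R : pzRingType) (U V : lmodType R) (f : U -> V)
    (I : finType) (w : I -> R) (v : I -> U) :
  linear f -> f (\sum_i w i *: v i) = \sum_i w i *: f (v i).
Proof.
move=> f_lin; have [fZ fD] := GRing.semilinear_linear f_lin.
have f0 : f 0 = 0 by rewrite -[0 in LHS](subrr 0) (zmod_morphism_linear f_lin) subrr.
by rewrite (big_morph f fD f0); apply: eq_bigr => i _; rewrite fZ.
Qed.

Lemma sum_ffun_prod_indicator (R : comRingType) (I J : finType) (t : I -> J -> R) :
  (forall i, \sum_j t i j = 1) ->
  forall i0 j0, \sum_(C : {ffun I -> J}) (\prod_i t i (C i)) * (C i0 == j0)%:R = t i0 j0.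
Proof.
move=> t_sum1 i0 j0.
pose G i j := t i j * (if i == i0 then (j == j0)%:R else 1).
transitivity (\sum_(C : {ffun I -> J}) \prod_i G i (C i)).
  apply: eq_bigr => C _; rewrite big_split /=; congr (_ * _).
  by rewrite (bigD1 i0) //= eqxx big1 ?mulr1 // => i /negPf ->.
have G_sum1 i : i != i0 -> \sum_j G i j = 1.
  by move=> /negPf ii0; rewrite -[RHS](t_sum1 i); apply: eq_bigr => j _; rewrite /G ii0 mulr1.
rewrite -bigA_distr_bigA (bigD1 i0) //= (eq_bigr _ G_sum1) big1_eq mulr1.
rewrite (bigD1 j0) //= big1 ?addr0; first by rewrite /G !eqxx mulr1.
by move=> j /negPf jj0; rewrite /G eqxx jj0 mulr0.
Qed.

Section Ln.
Variable R : realType.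

Lemma ln_leif_subr1 (y : R) : 0 < y -> ln y <= y - 1 ?= iff (y == 1).
Proof.
have ln_le (z : R) : 0 < z -> ln z <= z - 1.
  by move=> z0; have := @le_ln1Dx R (z - 1); rewrite [1 + _]addrC subrK; apply; lra.
move=> y0; split; first exact: ln_le.
apply/eqP/eqP => [lnyE|->]; last by rewrite ln1 subrr.
(* With [s = sqrt y], [ln y = 2 ln s <= 2 (s - 1)] forces [(s - 1)^2 <= 0]. *)
set s := Num.sqrt y; have s0 : 0 < s by rewrite sqrtr_gt0.
have yE : y = s ^+ 2 by rewrite sqr_sqrtr // ltW.
have : ln y <= 2 * (s - 1) by rewrite yE lnXn // mulr_natl lerMn2r ln_le.
rewrite lnyE yE => h; have /eqP : (s - 1) ^+ 2 = 0 by apply/le_anti; rewrite sqr_ge0; lra.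
by rewrite sqrf_eq0 subr_eq0 => /eqP ->; rewrite expr1n.
Qed.

Lemma ln_midpoint_ge (a b : R) : 0 < a -> 0 < b -> ln a + ln b <= 2 * ln ((a + b) / 2).
Proof.
move=> a0 b0; have m0 : 0 < (a + b) / 2 by rewrite divr_gt0 ?addr_gt0.
rewrite -lnM // mulr_natl -lnXn // ler_ln ?posrE ?exprn_gt0 ?(mulr_gt0 a0 b0) //.
exact: leif_AGM2.
Qed.

End Ln.

Definition normalize (R : realType) (K : nat) (w : 'I_K -> R) : 'I_K -> R :=
  fun k => w k / \sum_(j < K) w j.

Definition weighted_ln (R : realType) (K : nat) (w q : 'I_K -> R) : R :=
  \sum_(k < K) w k * ln (q k).

Lemma open_simplex_midpoint (R : realType) (K : nat) (p q : 'I_K -> R) :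
  in_open_simplex p -> in_simplex q -> in_open_simplex (fun k => (p k + q k) / 2).
Proof.
move=> [p_gt0 p_sum1] [q_ge0 q_sum1]; split => [k|].
  by rewrite divr_gt0 // ltr_wpDr.
by rewrite -mulr_suml big_split /= p_sum1 q_sum1 divff.
Qed.

Section Gibbs.
Variables (R : realType) (K : nat) (w : 'I_K -> R).
Hypotheses (w_ge0 : forall k, 0 <= w k) (w_sum_gt0 : 0 < \sum_(k < K) w k).

Lemma normalize_simplex : in_simplex (normalize w).
Proof.
split => [k|]; first by rewrite divr_ge0 // ltW.
by rewrite -mulr_suml divff // gt_eqF.
Qed.

Lemma normalize_gt0 k : w k != 0 -> 0 < normalize w k.
Proof. by move=> wk_neq0; rewrite divr_gt0 // lt_def wk_neq0 w_ge0. Qed.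

Lemma gibbs_term_leif k (y : R) : 0 < y ->
  w k * ln y - w k * ln (normalize w k) <= (\sum_(j < K) w j) * y - w k
    ?= iff (y == normalize w k).
Proof.
move=> y_gt0; have [wk0|wk_neq0] := eqVneq (w k) 0.
  (* Then [normalize w k = 0 < y]: neither side holds, whatever the value of [ln 0]. *)
  rewrite /normalize wk0 !mul0r subrr subr0; split; first by rewrite ltW ?mulr_gt0.
  by rewrite eq_sym !mulf_eq0 !gt_eqF.
have r_gt0 := normalize_gt0 wk_neq0; have wk_gt0 : 0 < w k by rewrite lt_def wk_neq0 w_ge0.
have -> : (\sum_(j < K) w j) * y - w k = w k * (y / normalize w k - 1).
  by rewrite /normalize; field; rewrite wk_neq0 gt_eqF.
rewrite -mulrBr -ln_div ?posrE // (mono_leif (ler_pM2l wk_gt0)).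
have [ln_le ln_eq] := ln_leif_subr1 (divr_gt0 y_gt0 r_gt0).
split => //; rewrite ln_eq; apply/eqP/eqP => [/divr1_eq|->] //.
by rewrite divff // gt_eqF.
Qed.

Lemma gibbs_leif (p : 'I_K -> R) : in_open_simplex p ->
  weighted_ln w p <= weighted_ln w (normalize w) ?= iff [forall k, p k == normalize w k].
Proof.
move=> [p_gt0 p_sum1].
rewrite -[weighted_ln w (normalize w)]add0r -leifBLR /weighted_ln -sumrB.
have := leif_sum (P := xpredT) (fun k _ => gibbs_term_leif k (p_gt0 k)).
by rewrite !sumrB -mulr_sumr p_sum1 mulr1 subrr.
Qed.

Lemma weighted_ln_midpoint (p : 'I_K -> R) : (forall k, 0 < p k) ->
  weighted_ln w p + weighted_ln w (normalize w)
    <= 2 * weighted_ln w (fun k => (p k + normalize w k) / 2).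
Proof.
move=> p_gt0; rewrite /weighted_ln -big_split mulr_sumr; apply: ler_sum => k _ /=.
have [wk0|wk_neq0] := eqVneq (w k) 0; first by rewrite wk0 !mul0r addr0 mulr0.
rewrite -mulrDr mulrCA ler_wpM2l //.
exact: ln_midpoint_ge (normalize_gt0 wk_neq0).
Qed.

End Gibbs.

Lemma lnDirB (R : realType) (K : nat) (b p q : 'I_K -> R) :
  lnDir b p - lnDir b q = \sum_(k < K) (b k - 1) * (ln (p k) - ln (q k)).
Proof.
rewrite /lnDir opprD addrACA subrr add0r -sumrB.
by apply: eq_bigr => k _; rewrite mulrBr.
Qed.

Lemma complete_logpostB (R : realType) (X A : Type) (N K : nat)
    (pi : 'I_K -> X -> A -> R) (f : 'I_N -> 'I_K -> 'rV[R]_N -> R^o)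
    (x : 'I_N -> X) (p q : 'I_N -> 'I_K -> R) (a : 'I_K -> A) (C : 'I_N -> 'I_K) :
  complete_logpost pi f x p a C - complete_logpost pi f x q a C
  = \sum_(n < N) \sum_(k < K) f n k (delta_row R C k) * (ln (p n k) - ln (q n k)).
Proof.
rewrite /complete_logpost opprD addrACA -!sumrB -big_split /=.
apply: eq_bigr => n _; rewrite lnDirB -sumrB -big_split /=.
by apply: eq_bigr => k _; rewrite /Bvec; ring.
Qed.

Section EStep.
Variables (R : realType) (X A : Type) (N K : nat).
Variables (x : 'I_N -> X) (pi : 'I_K -> X -> A -> R).
Variables (pt : 'I_N -> 'I_K -> R) (at_ : 'I_K -> A).
Hypotheses (pi_gt0 : forall k y a, 0 < pi k y a) (pt_simplex : forall n, in_simplex (pt n)).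

Lemma tau_ge0 n k : 0 <= tau pi x pt at_ n k.
Proof.
have pt_ge0 := (pt_simplex n).1.
have term_ge0 j : 0 <= pt n j * pi j (x n) (at_ j) by rewrite mulr_ge0 // ltW.
by rewrite divr_ge0 ?sumr_ge0.
Qed.

Lemma tau_sum1 n : \sum_(k < K) tau pi x pt at_ n k = 1.
Proof.
have [pt_ge0 pt_sum1] := pt_simplex n.
rewrite /tau -mulr_suml divff //; apply/eqP => Z_eq0.
have term_eq0 j : pt n j * pi j (x n) (at_ j) = 0.
  by apply: (psumr_eq0P _ Z_eq0) => // l _; rewrite mulr_ge0 // ltW.
move/eqP: pt_sum1; rewrite big1 ?(eq_sym 0) ?oner_eq0 // => j _.
by move/eqP: (term_eq0 j); rewrite mulf_eq0 (gt_eqF (pi_gt0 _ _ _)) orbF => /eqP.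
Qed.

Lemma sum_tau_delta_row k :
  \sum_(C : {ffun 'I_N -> 'I_K}) (\prod_(n < N) tau pi x pt at_ n (C n)) *: delta_row R C k
  = tau_row pi x pt at_ k.
Proof.
apply/rowP => i; rewrite summxE !mxE -[RHS](sum_ffun_prod_indicator tau_sum1 i k).
by apply: eq_bigr => C _; rewrite !mxE.
Qed.

Lemma QfunB (f : 'I_N -> 'I_K -> 'rV[R]_N -> R^o) (p q : 'I_N -> 'I_K -> R) (a : 'I_K -> A) :
  (forall n k, linear (f n k)) ->
  Qfun pi f x pt at_ p a - Qfun pi f x pt at_ q a
  = \sum_(n < N) (weighted_ln (fun k => f n k (tau_row pi x pt at_ k)) (p n)
                  - weighted_ln (fun k => f n k (tau_row pi x pt at_ k)) (q n)).
Proof.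
move=> f_lin; rewrite /Qfun -sumrB.
under eq_bigr do rewrite -mulrBr complete_logpostB mulr_sumr.
rewrite exchange_big; apply: eq_bigr => n _; rewrite /weighted_ln -sumrB.
under eq_bigr do rewrite mulr_sumr.
rewrite exchange_big; apply: eq_bigr => k _; rewrite -mulrBr.
under eq_bigr do rewrite mulrA.
by rewrite -mulr_suml -sum_tau_delta_row (linear_sumZ _ _ (f_lin n k)).
Qed.

End EStep.

Theorem proposition1 (R : realType) (X A : Type) (N K : nat)
  (x : 'I_N -> X) (pi : 'I_K -> X -> A -> R)
  (f : 'I_N -> 'I_K -> 'rV[R]_N -> R^o)
  (pt : 'I_N -> 'I_K -> R) (at_ : 'I_K -> A) :
  (forall k y a, 0 < pi k y a) ->
  (forall n k, linear (f n k)) ->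
  (forall n k (v : 'rV[R]_N), (forall i, 0 <= v ord0 i) -> 0 <= f n k v) ->
  (forall n, in_simplex (pt n)) ->
  (forall n, \sum_(k < K) f n k (tau_row pi x pt at_ k) != 0) ->
  forall (pstar : 'I_N -> 'I_K -> R) (astar : 'I_K -> A),
    (forall n, in_open_simplex (pstar n)) ->
    (forall (p : 'I_N -> 'I_K -> R) (a : 'I_K -> A),
        (forall n, in_open_simplex (p n)) ->
        Qfun pi f x pt at_ p a <= Qfun pi f x pt at_ pstar astar) ->
    forall n k,
      pstar n k = f n k (tau_row pi x pt at_ k)
                  / \sum_(k' < K) f n k' (tau_row pi x pt at_ k').
Proof.
move=> pi_gt0 f_lin f_ge0 pt_simplex f_sum_neq0 pstar astar pstar_simplex pstar_max n k.
pose F n' k' := f n' k' (tau_row pi x pt at_ k').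
have F_ge0 n' k' : 0 <= F n' k'.
  by apply: f_ge0 => i; rewrite mxE tau_ge0.
have F_sum_gt0 n' : 0 < \sum_(k' < K) F n' k'.
  by rewrite lt_def f_sum_neq0 sumr_ge0.
pose r n' := normalize (F n').
have gibbs n' := gibbs_leif (F_ge0 n') (F_sum_gt0 n') (pstar_simplex n').
have pstar_ge_r : \sum_(n' < N) weighted_ln (F n') (r n')
                  <= \sum_(n' < N) weighted_ln (F n') (pstar n').
  pose m n' k' := (pstar n' k' + r n' k') / 2.
  have m_simplex n' : in_open_simplex (m n').
    exact: open_simplex_midpoint (normalize_simplex (F_ge0 n') (F_sum_gt0 n')).
  have := pstar_max m astar m_simplex; rewrite -subr_le0 QfunB // sumrB.
  have : \sum_(n' < N) (weighted_ln (F n') (pstar n') + weighted_ln (F n') (r n'))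
         <= \sum_(n' < N) 2 * weighted_ln (F n') (m n').
    apply: ler_sum => n' _.
    exact: (weighted_ln_midpoint (F_ge0 n') (F_sum_gt0 n') (pstar_simplex n').1).
  rewrite big_split -mulr_sumr /=; lra.
have sum_gibbs := leif_sum (P := xpredT) (fun n' _ => gibbs n').
suff /forallP/(_ n)/forallP/(_ k)/eqP : [forall n', forall k', pstar n' k' == r n' k'] by [].
by rewrite -sum_gibbs.2 eq_le sum_gibbs.1 pstar_ge_r.
Qed.
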